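(* Let $G$ be a trigraph containing an OR gadget with inputs $V^1=\{x^1,y^1\}\cup V(F^1)$ and $V^2=\{x^2,y^2\}\cup V(F^2)$ (notation $a,b,c,d,e$ as in the context), where all fence gadgets involved satisfy the attachment rule in $G$. In any partial $4$-sequence from $G$, both the contraction merging $a$ and $b$ and the contraction merging $c$ and $d$ are preceded by the contraction merging $x^1$ and $y^1$ or by the contraction merging $x^2$ and $y^2$.
   Context: A trigraph $G$ consists of a vertex set $V(G)$ and two disjoint sets of unordered pairs of distinct vertices: black edges and red edges; the red graph is formed by the red edges. Contracting two distinct vertices $u,v$ replaces them by a new vertex $w$ such that, for every other vertex $z$, $wz$ is black if $uz,vz$ are both black, a non-edge if both are non-edges, and red otherwise. A partial $d$-sequence from $G$ is a sequence of trigraphs starting at $G$, each obtained from the previous by one contraction, all of maximum red degree at most $d$; each vertex of a later trigraph corresponds to the set (part) of vertices of $G$ merged into it, and ''the contraction merging $p$ and $q$'' is the contraction after which $p,q$ first lie in a common part. A fence gadget is a trigraph $F$ on $A\cup B$, $A=\{a_1,\dots,a_6\}$, $B=\{b_1,\dots,b_6\}$, whose black edges are those of the cycles $a_1a_2a_3a_4a_5a_6a_1$ and $b_1b_2b_3b_4b_5b_6b_1$ together with $b_1a_6$, and whose red edges are $a_ib_i$ for $i\in[6]$ and $a_ib_{i+1}$ for $i\in[5]$. Inside a trigraph $G$, $F$ is attached to a nonempty set $S\subseteq V(G)\setminus V(F)$ if every vertex of $A$ is joined by a black edge to every vertex of $S$ and no vertex of $B$ is adjacent to a vertex of $S$. $F$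 satisfies the attachment rule in $G$ if $V(F)$ is the vertex set of a connected component of the red graph of $G$ and there is a set $X\subseteq V(G)\setminus(V(F)\cup S)$ such that every vertex of $A$ has exactly $X\cup S$ as its set of neighbours outside $V(F)$, every vertex of $B$ has exactly $X$ as its set of neighbours outside $V(F)$ (all these edges black), and every vertex of $X$ is adjacent to every vertex of $S$. A vertical set is a set $\{x,y\}\cup V(F)$ where $F$ is a fence gadget attached to $\{x,y\}$; $\{x,y\}$ is its vertical pair. An OR gadget with inputs $V^1,V^2$ and output $V^3=\{x^3,y^3\}\cup V(F^3)$ (vertical sets) consists of: two vertical sets $\{a,b\}\cup V(F_{ab})$ and $\{c,d\}\cup V(F_{cd})$; black edges $ac$ and $bd$; a vertex $e$ adjacent exactly to $a$ and $c$ within the gadget; and a fence gadget $F_o$ attached to $\{a,b,c,d,e\}\cup V(F_{ab})\cup V(F_{cd})$. Furthermore $a$ is adjacent to $x^1$ and $y^1$ (not to $F^1$), $c$ is adjacent to $x^2$ and $y^2$ (not to $F^2$), and $x^3$ is adjacent to every vertex of the gadget (including $V(F_o)$), while $y^3$ has no neighbour in the gadget; there are no other edges between the gadget and $V^1\cup V^2\cup V^3$. *)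

From mathcomp Require Import all_boot.
Set Implicit Arguments. Unset Strict Implicit. Unset Printing Implicit Defensive.

Record trigraph (U : finType) := Trigraph {
  tV : {set U};
  tbl : rel U;
  trd : rel U }.

Section Trigraphs.
Variable U : finType.

Definition tadj (H : trigraph U) (x y : U) := tbl H x y || trd H x y.

Definition contract (H : trigraph U) (u v w : U) : trigraph U :=
  let V' := w |: ((tV H :\ u) :\ v) in
  Trigraph V'
    (fun x y => [&& x \in V', y \in V', x != y &
       if x == w then tbl H u y && tbl H v y
       else if y == w then tbl H x u && tbl H x v
       else tbl H x y])
    (fun x y => [&& x \in V', y \in V', x != y &
       if x == w then ~~ (tbl H u y && tbl H v y) && (tadj H u y || tadj H v y)
       else if y == w then ~~ (tbl H x u && tbl H x v) && (tadj H x u || tadj H x v)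
       else trd H x y]).

Definition reddeg (H : trigraph U) (x : U) := #|[set y in tV H | trd H x y]|.
Definition maxreddeg_le (H : trigraph U) (d : nat) :=
  forall x, x \in tV H -> reddeg H x <= d.
End Trigraphs.

Section Sequences.
Variable T : finType.
Variables bl rd : rel T.

Definition adj (x y : T) := bl x y || rd x y.

Definition lift : trigraph {set T} :=
  Trigraph [set [set x] | x : T]
    (fun X Y => [exists x, exists y, [&& X == [set x], Y == [set y] & bl x y]])
    (fun X Y => [exists x, exists y, [&& X == [set x], Y == [set y] & rd x y]]).

(* A sequence of contractions is given by the pairs of (current) vertices
   that are contracted; each vertex of a trigraph of the sequence is named
   by its part (the set of vertices of G merged into it), so the new vertex
   created by contracting u and v is u :|: v. *)
Definition cstep (H : trigraph {set T}) (p : {set T} * {set T}) :=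
  contract H p.1 p.2 (p.1 :|: p.2).

(* the k-th trigraph of the sequence (k = 0 is G itself) *)
Definition trig (s : seq ({set T} * {set T})) (k : nat) :=
  foldl cstep lift (take k s).

Definition partial_seq (d : nat) (s : seq ({set T} * {set T})) : Prop :=
  forall k, k <= size s ->
    maxreddeg_le (trig s k) d /\
    (k < size s ->
       let p := nth (set0, set0) s k in
       [/\ p.1 \in tV (trig s k), p.2 \in tV (trig s k) & p.1 != p.2]).

Definition merged (s : seq ({set T} * {set T})) (k : nat) (p q : T) :=
  [exists X in tV (trig s k), (p \in X) && (q \in X)].

(* Fence gadgets: a_1..a_6 = fA 0..5, b_1..b_6 = fB 0..5.              *)
Record fence := Fence { fA : 'I_6 -> T; fB : 'I_6 -> T }.

Definition VF (F : fence) : {set T} :=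
  [set fA F i | i : 'I_6] :|: [set fB F i | i : 'I_6].

Definition cyc6 (i j : 'I_6) :=
  (val j == (val i).+1 %% 6) || (val i == (val j).+1 %% 6).

Definition is_fence (F : fence) : Prop :=
  [/\ injective (fA F), injective (fB F),
      (forall i j, fA F i != fB F j) &
    [/\
      (forall i j, bl (fA F i) (fA F j) = cyc6 i j /\ rd (fA F i) (fA F j) = false),
      (forall i j, bl (fB F i) (fB F j) = cyc6 i j /\ rd (fB F i) (fB F j) = false) &
      (forall i j, bl (fA F i) (fB F j) = (val i == 5) && (val j == 0) /\
                   rd (fA F i) (fB F j) = (val j == val i) || (val j == (val i).+1))]].

Definition attached (F : fence) (S : {set T}) : Prop :=
  [/\ S != set0, [disjoint S & VF F] &
      forall i s, s \in S -> bl (fA F i) s /\ ~~ adj (fB F i) s].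

Definition attach_rule (F : fence) (S : {set T}) : Prop :=
  (exists x, [set y | connect rd x y] = VF F) /\
  exists X : {set T},
    [/\ [disjoint X & VF F :|: S],
        (forall i z, z \notin VF F ->
           (adj (fA F i) z = (z \in X :|: S)) /\ (adj (fA F i) z -> bl (fA F i) z)),
        (forall i z, z \notin VF F ->
           (adj (fB F i) z = (z \in X)) /\ (adj (fB F i) z -> bl (fB F i) z)) &
        (forall x z, x \in X -> z \in S -> adj x z)].

Definition vertical (x y : T) (F : fence) : Prop :=
  [/\ x != y, is_fence F & attached F [set x; y]].

Definition Vset (x y : T) (F : fence) : {set T} := [set x; y] :|: VF F.

Definition or_S (a b c d e : T) (Fab Fcd : fence) : {set T} :=
  [set a; b; c; d; e] :|: VF Fab :|: VF Fcd.

Definition or_W (a b c d e : T) (Fab Fcd Fo : fence) : {set T} :=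
  or_S a b c d e Fab Fcd :|: VF Fo.

Definition or_gadget (x1 y1 : T) (F1 : fence) (x2 y2 : T) (F2 : fence)
  (x3 y3 : T) (F3 : fence) (a b c d e : T) (Fab Fcd Fo : fence) : Prop :=
  let V1 := Vset x1 y1 F1 in
  let V2 := Vset x2 y2 F2 in
  let V3 := Vset x3 y3 F3 in
  let W := or_W a b c d e Fab Fcd Fo in
  let E u v := [|| (u == a) && (v == c), (u == b) && (v == d) |
                   (u == e) && ((v == a) || (v == c))] in
  [/\ vertical x1 y1 F1, vertical x2 y2 F2, vertical x3 y3 F3,
      [/\ [disjoint V1 & V2], [disjoint V1 & V3] & [disjoint V2 & V3]] &
  [/\
      [/\ vertical a b Fab, vertical c d Fcd, is_fence Fo &
          attached Fo (or_S a b c d e Fab Fcd)],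
      [/\ uniq [:: a; b; c; d; e], [disjoint VF Fab & VF Fcd],
          [disjoint [set a; b; c; d; e] & VF Fab :|: VF Fcd],
          [disjoint VF Fo & or_S a b c d e Fab Fcd] &
          [disjoint W & V1 :|: V2 :|: V3]],
      (forall u v, u \in [set a; b; c; d; e] -> v \in [set a; b; c; d; e] ->
         adj u v = E u v || E v u /\ (adj u v -> bl u v)),
      (forall v, v \in VF Fab :|: VF Fcd -> ~~ adj e v) &
      (forall g v, g \in W -> v \in V1 :|: V2 :|: V3 ->
         adj g v = [|| (g == a) && (v \in [set x1; y1]),
                       (g == c) && (v \in [set x2; y2]) | v == x3]
         /\ (adj g v -> bl g v))]].

End Sequences.

From Pilot Require Import Defs.
From mathcomp Require Import all_boot.
Set Implicit Arguments. Unset Strict Implicit. Unset Printing Implicit Defensive.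

(* The parts of every trigraph of a contraction sequence partition G, and two
   parts are joined by a red edge as soon as some vertex of the second one
   distinguishes two vertices of the first one (is adjacent to exactly one of
   them, or red to one of them).  Hence, in a partial 4-sequence, no part has
   five distinguishing vertices lying outside it in five distinct parts.

   A fence gadget is rigid enough that any two vertices of a vertical set
   {x, y} u V(F), other than x and y, are distinguished by five other vertices
   of the set; so, until x and y are merged, every part meets the vertical set
   in at most one vertex, and a part containing x or y contains no vertex
   missing A(F).

   Consider the first contraction merging a with b or c with d, say a with b,
   and suppose x1 and y1 are not merged yet.  Each of x1, y1, c, d, e
   distinguishes a from b.  None of
   them lies in the new part W: the six vertices of A(F_ab), which all see a and
   miss the five of them, would give W red degree 6.  They lie in distinct
   parts, because x1, y1 (resp. c, d) are unmerged and F1 (resp. F_cd)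
   separates them from the others.  So W has red degree 5.  The OR gadget is
   symmetric in its two inputs, which covers the merge of c and d. *)

Lemma disjoint_neq (T : finType) (A B : {set T}) u v :
  [disjoint A & B] -> u \in A -> v \in B -> u != v.
Proof. by move=> dAB Au Bv; apply: contraTneq Au => ->; rewrite (disjointFl dAB Bv). Qed.

Lemma ex_first_flip (P : nat -> bool) k : ~~ P 0 -> P k ->
  exists2 i, i < k & ~~ P i && P i.+1.
Proof.
elim: k => [/negbTE-> // | k IHk nP0 Pk1]; case: (boolP (P k)) => [Pk | nPk].
  by have [i lt_ik Pi] := IHk nP0 Pk; exists i; rewrite // ltnS ltnW.
by exists k; rewrite ?nPk.
Qed.

Lemma partition_merge (T : finType) (P : {set {set T}}) (A B : {set T}) :
  partition P [set: T] -> A \in P -> B \in P -> A != B ->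
  partition ((A :|: B) |: (P :\ A :\ B)) [set: T].
Proof.
move=> partP PA PB neAB.
have PB' : B \in P :\ A by rewrite in_setD1 eq_sym neAB.
have AB0 : A :|: B != set0.
  by case/set0Pn: (partition_neq0 partP PA) => t At; apply/set0Pn; exists t; rewrite inE At.
have compAB : [set: T] :\: A :\: B = ~: (A :|: B) by rewrite setDDl setTD.
have dAB : [disjoint A :|: B & [set: T] :\: A :\: B] by rewrite compAB disjoints_subset setCK.
have := partitionU1 (partitionD1 (partitionD1 partP PA) PB') AB0 dAB.
by rewrite compAB setUCr.
Qed.

Section Coarsening.
Variables (T : finType) (bl rd : rel T).
Hypothesis bl_rd : forall u v, ~~ (bl u v && rd u v).
Local Notation adj := (adj bl rd).

Definition coarsening (H : trigraph {set T}) : Prop :=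
  [/\ partition (tV H) [set: T],
      {in tV H &, forall P Q : {set T},
         P != Q -> tbl H P Q -> {in P & Q, forall p q : T, bl p q}} &
      {in tV H &, forall P Q : {set T},
         P != Q -> {in P & Q, forall p q : T, adj p q -> tadj H P Q}}].

Lemma coarsening_lift : coarsening (Defs.lift bl rd).
Proof.
split.
- have [tI _] : trivIset [set [set x] | x : T] /\ {in T &, injective set1}.
    apply: trivIimset => [x y _ _ neq_yx|]; first by rewrite disjoints1 inE eq_sym.
    by apply/imsetP => -[x _ /setP/(_ x)]; rewrite !inE eqxx.
  rewrite /partition tI cover_imset; apply/andP; split.
    by apply/eqP/setP => x; rewrite inE; apply/bigcupP; exists x; rewrite ?inE.
  by apply/imsetP => -[x _ /setP/(_ x)]; rewrite !inE eqxx.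
- move=> _ _ /imsetP[x _ ->] /imsetP[y _ ->] _ /existsP[x' /existsP[y']].
  by case/and3P => /eqP/set1_inj<- /eqP/set1_inj<- bl_xy p q /set1P-> /set1P->.
- move=> _ _ /imsetP[x _ ->] /imsetP[y _ ->] _ p q /set1P-> /set1P-> /orP[] e;
    apply/orP; [left | right]; apply/existsP; exists x; apply/existsP; exists y;
    by rewrite !eqxx.
Qed.

Lemma coarsening_contract H P Q : coarsening H -> P \in tV H -> Q \in tV H -> P != Q ->
  coarsening (contract H P Q (P :|: Q)).
Proof.
move=> [partH blH adjH] HP HQ neqPQ; set W := P :|: Q.
have /trivIsetP tiH := partition_trivIset partH.
have oldW R : R \in tV H -> R != P -> R != Q -> R != W.
  move=> HR neRP neRQ; apply/eqP => eRW.
  case/set0Pn: (partition_neq0 partH HR) => t Rt.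
  have /setUP[] : t \in W by rewrite -eRW.
    by rewrite (disjointFr (tiH _ _ HR HP neRP) Rt).
  by rewrite (disjointFr (tiH _ _ HR HQ neRQ) Rt).
have memV R : R \in tV (contract H P Q W) ->
    R = W \/ [/\ R \in tV H, R != P, R != Q & R != W].
  rewrite /= in_setU1 !in_setD1 => /orP[/eqP-> | /and3P[neRQ neRP HR]]; first by left.
  by right; split; rewrite ?oldW.
split; first exact: partition_merge.
- move=> R S /memV[->|[HR neRP neRQ neRW]] /memV[->|[HS neSP neSQ neSW]];
    rewrite ?eqxx // => neRS /and4P[_ _ _]; rewrite ?eqxx ?(negbTE neRW) ?(negbTE neSW).
  + case/andP=> PS QS p q /setUP[Pp|Qp] Sq.
      by apply: (blH P S) => //; rewrite eq_sym.
    by apply: (blH Q S) => //; rewrite eq_sym.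
  + case/andP=> RP RQ p q Rp /setUP[Pq|Qq]; [exact: (blH R P) | exact: (blH R Q)].
  + exact: blH.
- move=> R S VR VS neRS p q Rp Sq adj_pq; rewrite /tadj /= VR VS neRS /=.
  case: (memV R VR) (memV S VS) neRS Rp Sq
    => [->|[HR neRP neRQ neRW]] [->|[HS neSP neSQ neSW]];
    rewrite ?eqxx ?(negbTE neRW) ?(negbTE neSW) // => neRS Rp Sq.
  + case: (_ && _) => //=; case/setUP: Rp => [Pp|Qp]; apply/orP; [left | right].
      by apply: (adjH P S _ _ _ p q) => //; rewrite eq_sym.
    by apply: (adjH Q S _ _ _ p q) => //; rewrite eq_sym.
  + case: (_ && _) => //=; case/setUP: Sq => [Pq|Qq]; apply/orP; [left | right].
      exact: (adjH R P _ _ _ p q).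
    exact: (adjH R Q _ _ _ p q).
  + exact: (adjH R S _ _ _ p q).
Qed.

Definition distinguishes (t u v : T) := (adj u t != adj v t) || rd u t || rd v t.

Lemma red_of_distinguishes H W Q u v t : coarsening H -> W \in tV H -> Q \in tV H ->
  W != Q -> u \in W -> v \in W -> t \in Q -> distinguishes t u v -> trd H W Q.
Proof.
move=> [_ blH adjH] HW HQ neWQ Wu Wv Qt dt.
have [adj_ut_vt nbl_ut_vt] : (adj u t || adj v t) /\ (~~ bl u t || ~~ bl v t).
  move: dt (bl_rd u t) (bl_rd v t); rewrite /distinguishes /adj.
  by case: (bl u t) (rd u t) (bl v t) (rd v t) => [] [] [] [].
have tadjWQ : tadj H W Q by case/orP: adj_ut_vt; apply: (adjH W Q).
have ntblWQ : ~~ tbl H W Q.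
  apply/negP => /(blH W Q HW HQ neWQ) blWQ.
  by case/orP: nbl_ut_vt => /negP; apply; apply: blWQ.
by move: tadjWQ; rewrite /tadj (negbTE ntblWQ).
Qed.

Definition scattered (H : trigraph {set T}) (A : {set T}) :=
  forall (P : {set T}) u v, P \in tV H -> u \in A -> v \in A -> u \in P -> v \in P -> u = v.

Lemma scatteredS H (A B : {set T}) : A \subset B -> scattered H B -> scattered H A.
Proof. by move=> /subsetP sAB scB P u v HP Au Av; apply: scB => //; apply: sAB. Qed.

Lemma scattered1 H z : scattered H [set z].
Proof. by move=> P u v _ /set1P-> /set1P->. Qed.

Lemma scatteredU H (A B : {set T}) : scattered H A -> scattered H B ->
  (forall P u v, P \in tV H -> u \in A -> v \in B -> u \in P -> v \in P -> False) ->
  scattered H (A :|: B).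
Proof.
move=> scA scB apart P u v HP /setUP[Au|Bu] /setUP[Av|Bv] Pu Pv.
- exact: (scA P).
- by case: (apart P u v).
- by case: (apart P v u).
- exact: (scB P).
Qed.

Lemma distinguished_le_reddeg H W u v (A : {set T}) : coarsening H ->
  W \in tV H -> u \in W -> v \in W -> scattered H A -> [disjoint A & W] ->
  {in A, forall t, distinguishes t u v} -> #|A| <= reddeg H W.
Proof.
move=> cH HW Wu Wv scA dAW dA; have [partH _ _] := cH.
have cov t : t \in cover (tV H) by rewrite (cover_partition partH) inE.
rewrite -(card_in_imset (f := pblock (tV H))) => [|t t' At At' eqtt'].
  apply/subset_leq_card/subsetP => _ /imsetP[t At ->].
  rewrite inE pblock_mem //=; apply: (red_of_distinguishes cH HW _ _ Wu Wv _ (dA t At)).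
  - exact: pblock_mem.
  - by apply: contraFneq (disjointFr dAW At) => ->; rewrite mem_pblock.
  - by rewrite mem_pblock.
have Pt := pblock_mem (cov t).
by apply: (scA _ _ _ Pt At At'); [|rewrite eqtt']; rewrite mem_pblock.
Qed.
End Coarsening.

(* A vertical set {x, y} u V(F): [inl (inl i)] is a_i, [inl (inr i)] is b_i,
   [inr true] is x and [inr false] is y.  The gadget does not determine the
   pair xy, on which [mbl] and [mrd] are meaningless: [mdistinguishes] never
   looks at it. *)
Definition vmodel : finType := ('I_6 + 'I_6 + bool)%type.

Definition in_fence (z : vmodel) := if z is inl _ then true else false.

Definition mbl (z w : vmodel) :=
  match z, w with
  | inl (inl i), inl (inl j) | inl (inr i), inl (inr j) => cyc6 i j
  | inl (inl i), inl (inr j) | inl (inr j), inl (inl i) => (val i == 5) && (val j == 0)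
  | inl (inl _), inr _ | inr _, inl (inl _) => true
  | _, _ => false
  end.

Definition mrd (z w : vmodel) :=
  match z, w with
  | inl (inl i), inl (inr j) | inl (inr j), inl (inl i) =>
      (val j == val i) || (val j == (val i).+1)
  | _, _ => false
  end.

Definition mdistinguishes (t u v : vmodel) :=
  [&& in_fence u || in_fence t, in_fence v || in_fence t &
      (mbl u t || mrd u t != mbl v t || mrd v t) || mrd u t || mrd v t].

(* Listed by hand: [enum] does not reduce under [vm_compute]. *)
Definition ords6 : seq 'I_6 :=
  [:: @Ordinal 6 0 isT; @Ordinal 6 1 isT; @Ordinal 6 2 isT;
      @Ordinal 6 3 isT; @Ordinal 6 4 isT; @Ordinal 6 5 isT].

Definition vmodel_seq : seq vmodel :=
  [seq inl (inl i) | i <- ords6] ++ [seq inl (inr i) | i <- ords6] ++ [:: inr true; inr false].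

Lemma mem_ords6 (i : 'I_6) : i \in ords6.
Proof. by case: i => -[|[|[|[|[|[|//]]]]]] hi; rewrite !inE -val_eqE. Qed.

Lemma mem_vmodel_seq (z : vmodel) : z \in vmodel_seq.
Proof. by rewrite !mem_cat; case: z => [[] i|[]]; rewrite ?map_f ?mem_ords6 ?inE ?orbT. Qed.

Lemma vmodel_seq_uniq : uniq vmodel_seq.
Proof. by vm_compute. Qed.

Lemma vmodel_distinguishers : all (fun u => all (fun v =>
  (u != v) && (in_fence u || in_fence v) ==>
  (5 <= count (fun t => [&& t != u, t != v & mdistinguishes t u v]) vmodel_seq))
  vmodel_seq) vmodel_seq.
Proof. by vm_compute. Qed.

Section VerticalModel.
Variables (T : finType) (bl rd : rel T).
Hypotheses (bl_sym : symmetric bl) (rd_sym : symmetric rd).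
Hypothesis bl_rd : forall u v, ~~ (bl u v && rd u v).
Variables (x y : T) (F : fence T).
Hypothesis vF : vertical bl rd x y F.

Definition vertex_of (z : vmodel) : T :=
  match z with
  | inl (inl i) => fA F i
  | inl (inr i) => fB F i
  | inr b => if b then x else y
  end.

Lemma vertical_notin : x \notin VF F /\ y \notin VF F.
Proof. by case: vF => _ _ [_ disj _]; rewrite !(disjointFr disj) // !inE eqxx ?orbT. Qed.

Lemma vertex_of_Vset z : vertex_of z \in Vset x y F.
Proof. by case: z => [[] i|[]]; rewrite /= !inE ?eqxx ?imset_f ?orbT. Qed.

Lemma Vset_vertex_of u : u \in Vset x y F -> exists z, u = vertex_of z.
Proof.
rewrite !inE => /or3P[/orP[]/eqP-> | /imsetP[i _ ->] | /imsetP[i _ ->]].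
- by exists (inr true).
- by exists (inr false).
- by exists (inl (inl i)).
- by exists (inl (inr i)).
Qed.

Lemma vertex_of_inj : injective vertex_of.
Proof.
case: vF => nxy [iA iB dAB _] _; have [nx ny] := vertical_notin.
have inA i : fA F i \in VF F by rewrite inE imset_f.
have inB i : fB F i \in VF F by rewrite inE imset_f ?orbT.
case=> [[] i|[]] [[] j|[]] //= e;
  try by [rewrite (iA _ _ e) | rewrite (iB _ _ e) | move: (dAB i j); rewrite e eqxx
         | move: (dAB j i); rewrite e eqxx];
  by move: nx ny nxy; first [rewrite -e | rewrite e]; rewrite ?inA ?inB ?eqxx.
Qed.

Lemma vertical_attached_rel i s : s \in [set x; y] ->
  [/\ bl (fA F i) s, rd (fA F i) s = false, bl (fB F i) s = false & rd (fB F i) s = false].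
Proof.
case: vF => _ _ [_ _ att] Ss; have [blA nadjB] := att i s Ss.
move: nadjB (bl_rd (fA F i) s); rewrite /adj negb_or blA => /andP[/negbTE-> /negbTE->].
by move/negbTE.
Qed.

Lemma vertex_of_rel z w : in_fence z || in_fence w ->
  bl (vertex_of z) (vertex_of w) = mbl z w /\ rd (vertex_of z) (vertex_of w) = mrd z w.
Proof.
case: vF => _ [_ _ _ [hA hB hAB]] _.
have xyS (b : bool) : (if b then x else y) \in [set x; y] by case: b; rewrite !inE eqxx ?orbT.
case: z => [[] i|b]; case: w => [[] j|b'] //= _.
- by case: (vertical_attached_rel i (xyS b')) => -> ->.
- by rewrite bl_sym rd_sym; apply: hAB.
- by case: (vertical_attached_rel i (xyS b')) => _ _ -> ->.
- by rewrite bl_sym rd_sym; case: (vertical_attached_rel j (xyS b)) => -> ->.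
- by rewrite bl_sym rd_sym; case: (vertical_attached_rel j (xyS b)) => _ _ -> ->.
Qed.

Lemma distinguishes_vertex_of t u v : mdistinguishes t u v ->
  distinguishes bl rd (vertex_of t) (vertex_of u) (vertex_of v).
Proof.
case/and3P=> /vertex_of_rel[blu rdu] /vertex_of_rel[blv rdv].
by rewrite /distinguishes /adj blu rdu blv rdv.
Qed.

Lemma vertical_distinguishers u v : u \in Vset x y F -> v \in Vset x y F -> u != v ->
  [set u; v] != [set x; y] ->
  5 <= #|[set t in Vset x y F | [&& t != u, t != v & distinguishes bl rd t u v]]|.
Proof.
move=> /Vset_vertex_of[mu ->] /Vset_vertex_of[mv ->] neuv nexy.
have neq : mu != mv by apply: contraNneq neuv => ->.
have known : in_fence mu || in_fence mv.
  by move: neq nexy; clear neuv; case: mu => [?|[]] //; case: mv => [?|[]] //= _;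
     rewrite ?eqxx // setUC eqxx.
have := allP (allP vmodel_distinguishers mu (mem_vmodel_seq mu)) mv (mem_vmodel_seq mv).
rewrite neq known -size_filter -(size_map vertex_of) => five; apply: leq_trans five _.
rewrite cardE; apply: uniq_leq_size => [|z /mapP[t]].
  by rewrite (map_inj_uniq vertex_of_inj) filter_uniq ?vmodel_seq_uniq.
rewrite mem_filter => /andP[/and3P[netu netv dt] _] ->.
by rewrite mem_enum inE vertex_of_Vset !(inj_eq vertex_of_inj) netu netv distinguishes_vertex_of.
Qed.
End VerticalModel.

Section Sequence.
Variables (T : finType) (bl rd : rel T).
Hypotheses (bl_sym : symmetric bl) (rd_sym : symmetric rd).
Hypothesis bl_rd : forall u v, ~~ (bl u v && rd u v).
Variable s : seq ({set T} * {set T}).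
Hypothesis hs : partial_seq bl rd 4 s.
Local Notation adj := (adj bl rd).
Local Notation trig := (trig bl rd s).
Local Notation merged := (merged bl rd s).
Local Notation step k := (nth (set0, set0) s k).
Local Notation newpart k := ((step k).1 :|: (step k).2).

Lemma trigS k : k < size s -> trig k.+1 = cstep (trig k) (step k).
Proof. by move=> lt_ks; rewrite /Defs.trig (take_nth (set0, set0) lt_ks) foldl_rcons. Qed.

Lemma step_parts k : k < size s ->
  [/\ (step k).1 \in tV (trig k), (step k).2 \in tV (trig k) & (step k).1 != (step k).2].
Proof. by move=> lt_ks; case: (hs (ltnW lt_ks)) => _ /(_ lt_ks). Qed.

Lemma coarsening_trig k : k <= size s -> coarsening bl rd (trig k).
Proof.
elim: k => [_ | k IHk lt_ks]; first by rewrite /Defs.trig take0; apply: coarsening_lift.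
have [Hp1 Hp2 ne12] := step_parts lt_ks.
by rewrite trigS //; apply: coarsening_contract => //; apply: IHk; apply: ltnW.
Qed.

Lemma mem_trigS k X : k < size s -> X \in tV (trig k.+1) ->
  X = newpart k \/ [/\ X \in tV (trig k), X != (step k).1 & X != (step k).2].
Proof.
move=> lt_ks; rewrite trigS //= in_setU1 !in_setD1 => /orP[/eqP-> | /and3P[ne2 ne1 HX]].
  by left.
by right.
Qed.

Lemma newpart_trigS k : k < size s -> newpart k \in tV (trig k.+1).
Proof. by move=> lt_ks; rewrite trigS //= in_setU1 eqxx. Qed.

Lemma mergedP k p q :
  reflect (exists2 X, X \in tV (trig k) & (p \in X) && (q \in X)) (merged k p q).
Proof. by apply: (iffP exists_inP) => -[X HX]; exists X. Qed.

Lemma merged_step k p q : k < size s -> merged k p q -> merged k.+1 p q.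
Proof.
move=> lt_ks /mergedP[X HX /andP[Xp Xq]]; apply/mergedP.
case: (eqVneq X (step k).1) => [eX | ne1].
  by exists (newpart k); rewrite ?newpart_trigS // !inE -eX Xp Xq.
case: (eqVneq X (step k).2) => [eX | ne2].
  by exists (newpart k); rewrite ?newpart_trigS // !inE -eX Xp Xq !orbT.
by exists X; rewrite ?Xp // trigS //= in_setU1 !in_setD1 ne1 ne2 HX orbT.
Qed.

Lemma merged0 p q : merged 0 p q -> p = q.
Proof.
by case/mergedP=> X; rewrite /Defs.trig take0 => /imsetP[z _ ->] /andP[/set1P-> /set1P->].
Qed.

Lemma merged_newpart k p q : k < size s -> merged k.+1 p q -> ~~ merged k p q ->
  p \in newpart k /\ q \in newpart k.
Proof.
move=> lt_ks /mergedP[X HX /andP[Xp Xq]] nm.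
case: (mem_trigS lt_ks HX) => [<- // | [HX' _ _]].
by case/negP: nm; apply/mergedP; exists X; rewrite ?Xp.
Qed.

Lemma newpart_split k u v : k < size s -> u \in newpart k -> v \in newpart k ->
  ~~ merged k u v -> ((u \in (step k).1) || (v \in (step k).1)) &&
                     ((u \in (step k).2) || (v \in (step k).2)).
Proof.
move=> lt_ks; have [Hp1 Hp2 _] := step_parts lt_ks.
rewrite !inE => /orP[] Pu /orP[] Pv nm; rewrite ?Pu ?Pv ?orbT //; case/negP: nm.
  by apply/mergedP; exists (step k).1; rewrite ?Pu.
by apply/mergedP; exists (step k).2; rewrite ?Pu.
Qed.

Lemma scattered_newpart k (A : {set T}) u v : k < size s -> scattered (trig k) A ->
  u \in A -> v \in A -> (u \in (step k).1) || (v \in (step k).1) ->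
  (u \in (step k).2) || (v \in (step k).2) -> [disjoint A :\: [set u; v] & newpart k].
Proof.
move=> lt_ks scA Au Av uv1 uv2; have [Hp1 Hp2 _] := step_parts lt_ks.
apply/pred0P => t /=; apply/negbTE/negP; rewrite !inE => /andP[/andP[/norP[netu netv] At]].
have in_part P : P \in tV (trig k) -> (u \in P) || (v \in P) -> t \in P -> False.
  move=> HP /orP[] Pw Pt; [move/eqP: netu | move/eqP: netv]; apply; exact: (scA P).
by case/orP; apply: in_part.
Qed.

Lemma scattered_step k (A : {set T}) : k < size s -> scattered (trig k) A ->
  [disjoint A & newpart k] -> scattered (trig k.+1) A.
Proof.
move=> lt_ks scA dA P u v HP Au Av Pu Pv.
case: (mem_trigS lt_ks HP) => [eP | [HP' _ _]]; last exact: (scA P).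
by move: (disjointFr dA Au); rewrite -eP Pu.
Qed.

Lemma scattered_pair k u v : ~~ merged k u v -> scattered (trig k) [set u; v].
Proof.
move=> nm P p q HP /set2P[]-> /set2P[]-> // Pp Pq;
  by case/negP: nm; apply/mergedP; exists P; rewrite ?Pp ?Pq.
Qed.

Lemma distinguished_le4 k W u v (A : {set T}) : k <= size s -> W \in tV (trig k) ->
  u \in W -> v \in W -> scattered (trig k) A -> [disjoint A & W] ->
  {in A, forall t, distinguishes bl rd t u v} -> #|A| <= 4.
Proof.
move=> le_ks HW Wu Wv scA dAW dA; case: (hs le_ks) => /(_ W HW) le4 _.
exact: leq_trans (distinguished_le_reddeg bl_rd (coarsening_trig le_ks) HW Wu Wv scA dAW dA) le4.
Qed.

Lemma fence_separates j P F z1 z2 : j <= size s -> P \in tV (trig j) ->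
  is_fence bl rd F -> z1 \in P -> z2 \in P ->
  (forall i, adj z1 (fA F i) != adj z2 (fA F i)) -> (forall i, fA F i \notin P) ->
  scattered (trig j) (VF F) -> False.
Proof.
move=> le_js HP [injA _ _ _] Pz1 Pz2 dA nPA scF.
suff : #|[set fA F i | i : 'I_6]| <= 4 by rewrite card_imset // card_ord.
apply: (distinguished_le4 le_js HP Pz1 Pz2).
- by apply: scatteredS scF; apply/subsetP => t At; rewrite inE At.
- by apply/pred0P => t /=; apply/negbTE/negP => /andP[/imsetP[i _ ->]]; apply/negP.
- by move=> _ /imsetP[i _ ->]; rewrite /distinguishes dA.
Qed.

Lemma vertical_scattered x y F k : vertical bl rd x y F -> k <= size s ->
  ~~ merged k x y -> scattered (trig k) (Vset x y F).
Proof.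
move=> vF; elim: k => [_ _ P u v | k IHk lt_ks nm].
  by rewrite /Defs.trig take0 => /imsetP[z _ ->] _ _ /set1P-> /set1P->.
have {IHk} scV := IHk (ltnW lt_ks) (contra (merged_step lt_ks) nm).
have in_newpart u v : u \in newpart k -> v \in newpart k ->
    u \in Vset x y F -> v \in Vset x y F -> u = v.
  move=> Wu Wv Vu Vv; apply/eqP/negPn/negP => neuv.
  have nm_uv : ~~ merged k u v.
    by apply: contra neuv => /mergedP[X HX /andP[Xu Xv]]; apply/eqP; apply: (scV X).
  have /andP[uv1 uv2] := newpart_split lt_ks Wu Wv nm_uv.
  have nexy : [set u; v] != [set x; y].
    apply: contra nm => /eqP exy; apply/mergedP; exists (newpart k); first exact: newpart_trigS.
    have xyW z : z \in [set x; y] -> z \in newpart k by rewrite -exy => /set2P[]->.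
    by rewrite !xyW // !inE eqxx ?orbT.
  have := vertical_distinguishers bl_sym rd_sym bl_rd vF Vu Vv neuv nexy.
  apply/negP; rewrite -ltnNge ltnS.
  set D := [set t in Vset x y F | _].
  have subD : D \subset Vset x y F :\: [set u; v].
    by apply/subsetP => t; rewrite !inE => /and4P[-> /negbTE-> /negbTE->].
  have dDW := disjointWl subD (scattered_newpart lt_ks scV Vu Vv uv1 uv2).
  apply: (distinguished_le4 lt_ks (newpart_trigS lt_ks) Wu Wv _ dDW).
    exact: scattered_step lt_ks (scatteredS (subset_trans subD (subsetDl _ _)) scV) dDW.
  by move=> t; rewrite inE => /and4P[].
move=> P u v HP Vu Vv Pu Pv; case: (mem_trigS lt_ks HP) => [eP | [HP' _ _]].
  by move: Pu Pv; rewrite eP => Wu Wv; apply: in_newpart.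
exact: (scV P).
Qed.

Lemma vertical_apart x y F k P z z' : vertical bl rd x y F -> k <= size s ->
  ~~ merged k x y -> z \in [set x; y] -> (forall i, ~~ adj z' (fA F i)) ->
  P \in tV (trig k) -> z \in P -> z' \in P -> False.
Proof.
move=> vF le_ks nm xyz nadj HP Pz Pz'.
have scV := vertical_scattered vF le_ks nm.
have [_ fF [_ _ att]] := vF.
have [nxF nyF] := vertical_notin vF.
apply: (fence_separates le_ks HP fF Pz Pz') => [i | i | ].
- by have [blA _] := att i z xyz; rewrite (negbTE (nadj i)) /adj bl_sym blA.
- apply/negP => PA.
  have eAz : fA F i = z.
    apply: (scV P) => //; first exact: (vertex_of_Vset x y F (inl (inl i))).
    by rewrite in_setU xyz.
  have : fA F i \in VF F by rewrite inE imset_f.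
  by rewrite eAz; case/set2P: xyz => ->; apply/negP.
- exact: scatteredS (subsetUr _ _) scV.
Qed.

Lemma merged_fence_outside a b F k : vertical bl rd a b F -> k < size s ->
  merged k.+1 a b -> ~~ merged k a b ->
  [disjoint VF F & newpart k] /\ scattered (trig k.+1) (VF F).
Proof.
move=> vab lt_ks mab nab.
have [Wa Wb] := merged_newpart lt_ks mab nab.
have /andP[ab1 ab2] := newpart_split lt_ks Wa Wb nab.
have scab := vertical_scattered vab (ltnW lt_ks) nab.
have [naF nbF] := vertical_notin vab.
have subF : VF F \subset Vset a b F :\: [set a; b].
  apply/subsetP => t Ft; rewrite in_setD (subsetP (subsetUr _ _) t Ft) andbT.
  by apply/negP => /set2P[] et; [move: naF | move: nbF]; rewrite -et Ft.
have dFW := disjointWl subF (scattered_newpart lt_ks scab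
  (vertex_of_Vset a b F (inr true)) (vertex_of_Vset a b F (inr false)) ab1 ab2).
split => //; apply: scattered_step lt_ks _ dFW.
exact: scatteredS (subset_trans subF (subsetDl _ _)) scab.
Qed.

(* One input (x, y, F) of an OR gadget together with the vertical pair (a, b)
   it is wired to; (c, d) is the other vertical pair. *)
Record or_half (x y : T) (F : fence T) (a b c d e : T) (Fab Fcd : fence T) : Prop := OrHalf {
  or_half_input : vertical bl rd x y F;
  or_half_ab : vertical bl rd a b Fab;
  or_half_cd : vertical bl rd c d Fcd;
  or_half_uniq : uniq [:: x; y; c; d; e];
  or_half_distinguish : forall t, t \in [:: x; y; c; d; e] -> distinguishes bl rd t a b;
  or_half_Fab : forall t i, t \in [:: x; y; c; d; e] -> ~~ adj t (fA Fab i);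
  or_half_F : forall t i, t \in [:: c; d; e] -> ~~ adj t (fA F i);
  or_half_Fcd : forall i, ~~ adj e (fA Fcd i) }.

Lemma or_half_merged x y F a b c d e Fab Fcd k :
  or_half x y F a b c d e Fab Fcd -> k < size s ->
  merged k.+1 a b -> ~~ merged k a b -> ~~ merged k c d -> merged k x y.
Proof.
case=> vF vab vcd uniq_w dist_w w_Fab cde_F e_Fcd lt_ks mab nab ncd.
apply: contraT => nxy; have le_ks := ltnW lt_ks.
have [Wa Wb] := merged_newpart lt_ks mab nab.
have [dFW scFab] := merged_fence_outside vab lt_ks mab nab.
have [_ fab [_ _ att_ab]] := vab.
set A := [set t in [:: x; y; c; d; e]].
have dAW : [disjoint A & newpart k].
  apply/pred0P => t /=; apply/negbTE/negP => /andP[At Wt]; rewrite inE in At.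
  apply: (fence_separates lt_ks (newpart_trigS lt_ks) fab Wa Wt _ _ scFab) => i.
    have [blA _] := att_ab i a (set21 a b).
    by rewrite (negbTE (w_Fab t i At)) /adj bl_sym blA.
  by rewrite (disjointFr dFW) // inE imset_f.
have scA : scattered (trig k) A.
  have -> : A = [set x; y] :|: ([set c; d] :|: [set e]) by apply/setP => t; rewrite !inE !orbA.
  apply: scatteredU (scattered_pair nxy)
    (scatteredU (scattered_pair ncd) (@scattered1 _ _ e) _) _.
    move=> P u v HP cdu /set1P-> Pu Pe.
    exact: (vertical_apart vcd le_ks ncd cdu e_Fcd HP Pu Pe).
  move=> P u v HP xyu cdev Pu Pv; apply: (vertical_apart vF le_ks nxy xyu _ HP Pu Pv) => i.
  by apply: cde_F; move: cdev; rewrite !inE orbA.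
have : #|A| <= 4.
  apply: (distinguished_le4 lt_ks (newpart_trigS lt_ks) Wa Wb _ dAW).
    exact: scattered_step lt_ks scA dAW.
  by move=> t; rewrite inE; apply: dist_w.
by rewrite cardsE; move/card_uniqP: uniq_w => ->.
Qed.
End Sequence.

Section OrGadget.
Variables (T : finType) (bl rd : rel T).
Hypotheses (bl_sym : symmetric bl) (rd_sym : symmetric rd).
Local Notation adj := (adj bl rd).

Lemma adj_sym : symmetric adj.
Proof. by move=> u v; rewrite /adj bl_sym rd_sym. Qed.

Lemma attach_rule_nonadj F S z w : attach_rule bl rd F S -> z \notin VF F -> z \notin S ->
  w \in S -> ~~ adj z w -> forall i, ~~ adj z (fA F i).
Proof.
move=> [_ [X [_ adjA _ adjXS]]] nFz nSz Sw nzw i.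
rewrite adj_sym; case: (adjA i z nFz) => -> _; rewrite in_setU (negbTE nSz) orbF.
by apply: contra nzw => Xz; apply: adjXS.
Qed.

Variables (x1 y1 x2 y2 x3 y3 a b c d e : T) (F1 F2 F3 Fab Fcd Fo : fence T).
Hypothesis hOR : or_gadget bl rd x1 y1 F1 x2 y2 F2 x3 y3 F3 a b c d e Fab Fcd Fo.

Lemma or_gadget_swap : or_gadget bl rd x2 y2 F2 x1 y1 F1 x3 y3 F3 c d a b e Fcd Fab Fo.
Proof.
have e5 : [set c; d; a; b; e] = [set a; b; c; d; e].
  by apply/setP => t; rewrite !inE; do ![case: (_ == _)].
have eS : or_S c d a b e Fcd Fab = or_S a b c d e Fab Fcd by rewrite /or_S e5 setUAC.
have eW : or_W c d a b e Fcd Fab Fo = or_W a b c d e Fab Fcd Fo by rewrite /or_W eS.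
case: hOR => v1 v2 v3 [d12 d13 d23] [[vab vcd fo ato] [u5 dFF d5F dFo dWV] E5 he hG].
split => //; first by rewrite disjoint_sym.
split.
- by rewrite eS.
- split.
  + by rewrite (perm_uniq (permEl (perm_catCA [:: c; d] [:: a; b] [:: e]))).
  + by rewrite disjoint_sym.
  + by rewrite e5 (setUC (VF Fcd)).
  + by rewrite eS.
  + by rewrite eW (setUC (Vset x2 y2 F2)).
- move=> u v; rewrite e5 => in5u in5v; have [-> blE] := E5 u v in5u in5v; split => //.
  by do ![case: (_ == _)].
- by move=> v; rewrite (setUC (VF Fcd)); apply: he.
- move=> g v; rewrite eW (setUC (Vset x2 y2 F2)) => Wg Vv.
  by have [eG blG] := hG g v Wg Vv; split => //; rewrite eG orbCA.
Qed.
Local Notation W := (or_W a b c d e Fab Fcd Fo).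
Local Notation V := (Vset x1 y1 F1 :|: Vset x2 y2 F2 :|: Vset x3 y3 F3).

Lemma or_W_five t : t \in [:: a; b; c; d; e] -> t \in W.
Proof. by rewrite /or_W /or_S !in_setU !inE => /orP[-> | /or4P[]->]; rewrite ?orbT. Qed.

Lemma or_V_input t : t \in Vset x1 y1 F1 -> t \in V.
Proof. by rewrite !in_setU => ->. Qed.

Lemma or_gadget_five_adj :
  [/\ adj a c && adj b d, adj a e, ~~ adj a d, ~~ adj b c & ~~ adj b e].
Proof.
case: hOR => _ _ _ _ [_ [uniq5 _ _ _ _] adj5 _ _].
rewrite /= !inE !negb_or in uniq5.
case/and5P: uniq5 => /and4P[nab nac nad nae] /and3P[nbc nbd nbe] /andP[ncd nce] nde _.
have ne5 := (negbTE nab, negbTE nac, negbTE nad, negbTE nae, negbTE nbc, negbTE nbd,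
  negbTE nbe, negbTE ncd, negbTE nce, negbTE nde).
have sym5 := (eq_sym b a, eq_sym c a, eq_sym d a, eq_sym e a, eq_sym c b, eq_sym d b,
  eq_sym e b, eq_sym d c, eq_sym e c, eq_sym e d).
have [a5 b5 c5 d5 e5] : [/\ a \in [set a; b; c; d; e], b \in [set a; b; c; d; e],
  c \in [set a; b; c; d; e], d \in [set a; b; c; d; e] & e \in [set a; b; c; d; e]].
  by rewrite !inE !eqxx ?orbT.
have E5 u v hu hv : adj u v = _ := (adj5 u v hu hv).1.
rewrite (E5 _ _ a5 c5) (E5 _ _ b5 d5) (E5 _ _ a5 e5) (E5 _ _ a5 d5) (E5 _ _ b5 c5).
by rewrite (E5 _ _ b5 e5) ?eqxx /= ?sym5 ?ne5 ?orbT.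
Qed.

Lemma or_gadget_input_adj :
  [/\ forall t, t \in [set x1; y1] -> adj a t && ~~ adj b t,
      forall t i, t \in [set x1; y1] -> ~~ adj t (fA Fab i) &
      forall t i, t \in [:: c; d; e] -> ~~ adj t (fA F1 i)].
Proof.
case: hOR => _ _ _ [d12 d13 _] [_ [uniq5 _ d5F _ _] _ _ adjWV].
have wiring g v : g \in W -> v \in V -> adj g v = _ := fun Wg Vv => (adjWV g v Wg Vv).1.
have WFab i : fA Fab i \in W by rewrite /or_W /or_S !in_setU inE imset_f ?orbT.
have xyV1 t : t \in [set x1; y1] -> t \in Vset x1 y1 F1.
  by move=> xyt; rewrite /Vset in_setU xyt.
have AV1 i : fA F1 i \in Vset x1 y1 F1 := vertex_of_Vset x1 y1 F1 (inl (inl i)).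
have ne13 t : t \in Vset x1 y1 F1 -> (t == x3) = false.
  by move=> V1t; apply/negbTE/(disjoint_neq d13 V1t); rewrite !inE eqxx.
have ne12 t : t \in Vset x1 y1 F1 -> (t \in [set x2; y2]) = false.
  move=> V1t; apply/negbTE; apply: contraFN (disjointFr d12 V1t) => xy2.
  by rewrite /Vset in_setU xy2.
have FAne t i : t \in [:: a; b; c; d; e] -> (fA Fab i == t) = false.
  move=> t5; rewrite eq_sym; apply/negbTE/(disjoint_neq d5F); last by rewrite !inE imset_f.
  by move: t5; rewrite !inE => /orP[-> | /or4P[]->]; rewrite ?orbT.
rewrite /= !inE !negb_or in uniq5.
case/and5P: uniq5 => /and4P[nab nac nad nae] /and3P[nbc _ _] _ _ _.
have W5' : [/\ a \in W, b \in W, c \in W, d \in W & e \in W].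
  by split; apply: or_W_five; rewrite !inE eqxx ?orbT.
have [aW bW cW dW eW] := W5'.
split.
- move=> t xyt; have Vt := or_V_input (xyV1 _ xyt).
  rewrite (wiring _ _ aW Vt) (wiring _ _ bW Vt) eqxx xyt (ne13 _ (xyV1 _ xyt)).
  by rewrite (eq_sym b a) (negbTE nab) (negbTE nbc).
- move=> t i xyt; have Vt := or_V_input (xyV1 _ xyt).
  by rewrite adj_sym (wiring _ _ (WFab i) Vt) !FAne ?inE ?eqxx ?orbT // (ne13 _ (xyV1 _ xyt)).
- move=> t i; have VA := or_V_input (AV1 i).
  rewrite !inE => /or3P[]/eqP->; rewrite wiring // (ne12 _ (AV1 i)) (ne13 _ (AV1 i)) !andbF.
  + by rewrite (eq_sym c a) (negbTE nac).
  + by rewrite (eq_sym d a) (negbTE nad).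
  + by rewrite (eq_sym e a) (negbTE nae).
Qed.

Lemma or_gadget_uniq : uniq [:: x1; y1; c; d; e].
Proof.
case: hOR => [[nxy _ _] _ _ _ [_ [uniq5 _ _ _ dWV] _ _ _]].
rewrite -[x1 :: _]/([:: x1; y1] ++ [:: c; d; e]) cat_uniq; apply/and3P; split.
- by rewrite /= inE nxy.
- apply/hasPn => t cde; have Wt : t \in W.
    by apply: or_W_five; move: cde; rewrite !inE => /or3P[]->; rewrite ?orbT.
  have xy1V u : u \in [:: x1; y1] -> u \in V.
    move=> xyu; apply: or_V_input; rewrite !inE in xyu; case/orP: xyu => /eqP->.
      exact: (vertex_of_Vset _ _ _ (inr true)).
    exact: (vertex_of_Vset _ _ _ (inr false)).
  by apply/negP => /xy1V; apply/negP; rewrite (disjointFr dWV Wt).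
by move: uniq5; rewrite -[a :: _]/([:: a; b] ++ [:: c; d; e]) cat_uniq => /and3P[].
Qed.

Lemma or_gadget_half :
  attach_rule bl rd Fab [set a; b] -> or_half bl rd x1 y1 F1 a b c d e Fab Fcd.
Proof.
move=> rab; have [/andP[adj_ac adj_bd] adj_ae nadj_ad nadj_bc nadj_be] := or_gadget_five_adj.
have [ab_xy Fab_xy F1_cde] := or_gadget_input_adj.
case: hOR => vF1 _ _ _ [[vab vcd _ _] [uniq5 _ d5F _ _] _ e_miss _].
have outFab t : t \in [:: c; d] -> t \notin VF Fab.
  move=> cd; apply: contraFN (disjointFr d5F (_ : t \in [set a; b; c; d; e])).
    by move=> Ft; rewrite in_setU Ft.
  by move: cd; rewrite !inE => /orP[]->; rewrite ?orbT.
rewrite /= !inE !negb_or in uniq5.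
case/and5P: uniq5 => /and4P[_ nac nad _] /and3P[nbc nbd _] _ _ _.
apply: OrHalf => //; first exact: or_gadget_uniq.
- move=> t; rewrite /distinguishes -orbA => wt; apply/orP; left.
  move: wt; rewrite !inE => /orP[/eqP-> | /or4P[]/eqP->].
  + by case/andP: (ab_xy x1 (set21 x1 y1)) => -> /negbTE->.
  + by case/andP: (ab_xy y1 (set22 x1 y1)) => -> /negbTE->.
  + by rewrite adj_ac (negbTE nadj_bc).
  + by rewrite adj_bd (negbTE nadj_ad).
  + by rewrite adj_ae (negbTE nadj_be).
- move=> t i; rewrite !inE => /orP[/eqP-> | /or4P[]/eqP->].
  + exact: Fab_xy (set21 x1 y1).
  + exact: Fab_xy (set22 x1 y1).
  + apply: (attach_rule_nonadj rab (outFab c _) _ (set22 a b)); rewrite ?inE ?eqxx //.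
      by rewrite negb_or !(eq_sym c) nac nbc.
    by rewrite adj_sym.
  + apply: (attach_rule_nonadj rab (outFab d _) _ (set21 a b)); rewrite ?inE ?eqxx ?orbT //.
      by rewrite negb_or !(eq_sym d) nad nbd.
    by rewrite adj_sym.
  + by apply: e_miss; rewrite !inE imset_f.
- by move=> i; apply: e_miss; rewrite !inE imset_f ?orbT.
Qed.
End OrGadget.

Unset Implicit Arguments.

Theorem lemma4p13 (T : finType) (bl rd : rel T)
  (bl_sym : symmetric bl) (rd_sym : symmetric rd)
  (bl_irr : irreflexive bl) (rd_irr : irreflexive rd)
  (bl_rd : forall u v, ~~ (bl u v && rd u v))
  (x1 y1 x2 y2 x3 y3 a b c d e : T) (F1 F2 F3 Fab Fcd Fo : fence T)
  (hOR : or_gadget bl rd x1 y1 F1 x2 y2 F2 x3 y3 F3 a b c d e Fab Fcd Fo)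
  (r1 : attach_rule bl rd F1 [set x1; y1])
  (r2 : attach_rule bl rd F2 [set x2; y2])
  (r3 : attach_rule bl rd F3 [set x3; y3])
  (rab : attach_rule bl rd Fab [set a; b])
  (rcd : attach_rule bl rd Fcd [set c; d])
  (ro : attach_rule bl rd Fo (or_S a b c d e Fab Fcd))
  (s : seq ({set T} * {set T})) (hs : partial_seq bl rd 4 s) :
  forall k, k <= size s ->
    (merged bl rd s k a b ->
       exists2 j, j < k & merged bl rd s j x1 y1 \/ merged bl rd s j x2 y2) /\
    (merged bl rd s k c d ->
       exists2 j, j < k & merged bl rd s j x1 y1 \/ merged bl rd s j x2 y2).
Proof.
have half1 := or_gadget_half bl_sym rd_sym hOR rab.
have half2 := or_gadget_half bl_sym rd_sym (or_gadget_swap hOR) rcd.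
have [[nab _ _] [ncd _ _]] := (or_half_ab half1, or_half_ab half2).
pose ab_or_cd j := merged bl rd s j a b || merged bl rd s j c d.
suff first_merge k : k <= size s -> ab_or_cd k ->
    exists2 j, j < k & merged bl rd s j x1 y1 \/ merged bl rd s j x2 y2.
  by move=> k le_ks; split => mk; apply: first_merge => //; rewrite /ab_or_cd mk ?orbT.
move=> le_ks mk.
have nm0 : ~~ ab_or_cd 0.
  by apply/norP; split; apply/negP => /merged0 eq0; [move: nab | move: ncd]; rewrite eq0 eqxx.
have [i lt_ik /andP[/norP[nab_i ncd_i] /orP m_i]] := ex_first_flip nm0 mk.
have lt_is : i < size s := leq_trans lt_ik le_ks.
exists i => //; case: m_i => [mab | mcd].
  by left; apply: (or_half_merged bl_sym rd_sym bl_rd hs half1 lt_is).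
by right; apply: (or_half_merged bl_sym rd_sym bl_rd hs half2 lt_is).
Qed.
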